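(* Let $N_k=N\cup\{\Gamma\rightarrow E[x]_{p,q}\}$ and $N_{k+1}=N\cup\{\Gamma\{x\mapsto x'\},\Gamma\rightarrow E[x']_q\}$ be obtained by a Linear transformation. Let $N^\bot_{k+1}$ be a conflicting core of $N_{k+1}$, and let $(\Gamma\{x\mapsto x'\},\Gamma\rightarrow E[x']_q)\sigma_j$, $1\le j\le m$, be the clauses of $N^\bot_{k+1}$ that are instances of $\Gamma\{x\mapsto x'\},\Gamma\rightarrow E[x']_q$. If $x\sigma_j=x'\sigma_j$ for all $1\le j\le m$, then $$\big(N^\bot_{k+1}\setminus\{(\Gamma\{x\mapsto x'\},\Gamma\rightarrow E[x']_q)\sigma_j\mid 1\le j\le m\}\big)\cup\{(\Gamma\rightarrow E[x]_{p,q})\sigma_j\mid 1\le j\le m\}$$ is a conflicting core of $N_k$.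
   Context: First-order logic without equality. A clause is a finite multiset of literals written $\Gamma \rightarrow \Delta$. A Herbrand interpretation is a set of ground atoms; $I \models \Gamma\rightarrow\Delta$ iff for every grounding substitution $\sigma$, $\Delta\sigma\cap I\neq\emptyset$ or $\Gamma\sigma\not\subseteq I$. $E[x]_{p,q}$ denotes an atom with occurrences of variable $x$ at two different positions $p,q$, and $E[x']_q$ the atom obtained by replacing the occurrence at $q$ by $x'$. Linear transformation: $N\cup\{\Gamma\rightarrow E[x]_{p,q}\}\Rightarrow N\cup\{\Gamma\{x\mapsto x'\},\Gamma\rightarrow E[x']_q\}$ with $x'$ a fresh variable. A finite clause set $N^\bot$ is a conflicting core if for every substitution $\tau$ grounding all of $N^\bot$ (one substitution for the whole set, so variables are shared among clauses) the set $N^\bot\tau$ is unsatisfiable. $N^\bot$ is a conflicting core of $N$ if moreover every $C\in N^\bot$ equals $C'\sigma$ for some $C'\in N$ and substitution $\sigma$. *)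

From Stdlib Require Import List Arith Permutation.
Import ListNotations.

Inductive term : Type :=
| Var : nat -> term
| Fn  : nat -> list term -> term.

Definition subst := nat -> term.

Fixpoint tsubst (s : subst) (t : term) : term :=
  match t with
  | Var v => s v
  | Fn f ts => Fn f (map (tsubst s) ts)
  end.

Fixpoint tvars (t : term) : list nat :=
  match t with
  | Var v => [v]
  | Fn _ ts => flat_map tvars ts
  end.

Definition ground (t : term) : Prop := tvars t = [].

Record atom := Atom { apred : nat; aargs : list term }.

Definition asubst (s : subst) (A : atom) : atom :=
  Atom (apred A) (map (tsubst s) (aargs A)).
Definition avars (A : atom) : list nat := flat_map tvars (aargs A).

(* A clause  Gamma -> Delta ; lists read as multisets (see clause_eqv). *)
Record clause := Cl { ante : list atom; succ : list atom }.

Definition csubst (s : subst) (C : clause) : clause :=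
  Cl (map (asubst s) (ante C)) (map (asubst s) (succ C)).
Definition cvars (C : clause) : list nat :=
  flat_map avars (ante C) ++ flat_map avars (succ C).

Definition clause_eqv (C D : clause) : Prop :=
  Permutation (ante C) (ante D) /\ Permutation (succ C) (succ D).

Definition is_instance (C D : clause) : Prop :=
  exists s : subst, clause_eqv C (csubst s D).

(* Herbrand interpretations: sets of (ground) atoms *)
Definition interp := atom -> Prop.

Definition models (I : interp) (C : clause) : Prop :=
  forall s : subst, (forall v, In v (cvars C) -> ground (s v)) ->
    (exists A, In A (succ (csubst s C)) /\ I A) \/
    ~ (forall A, In A (ante (csubst s C)) -> I A).

Definition clause_set := clause -> Prop.

Definition satisfiable (S : clause_set) : Prop :=
  exists I : interp, forall C, S C -> models I C.

Definition finite_set (S : clause_set) : Prop :=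
  exists l : list clause, forall C, S C <-> In C l.

(* tau grounds all clauses of S (one substitution for the whole set) *)
Definition grounds (t : subst) (S : clause_set) : Prop :=
  forall C, S C -> forall v, In v (cvars C) -> ground (t v).

Definition set_subst (t : subst) (S : clause_set) : clause_set :=
  fun C => exists C0, S C0 /\ C = csubst t C0.

Definition conflicting_core (S : clause_set) : Prop :=
  finite_set S /\
  forall t : subst, grounds t S -> ~ satisfiable (set_subst t S).

Definition conflicting_core_of (S N : clause_set) : Prop :=
  conflicting_core S /\ forall C, S C -> exists C', N C' /\ is_instance C C'.

(* Positions: an atom position is a nonempty list i :: p (argument i, then
   path p inside that argument term). *)
Fixpoint tsub_at (t : term) (p : list nat) : option term :=
  match p with
  | [] => Some t
  | i :: p' =>
      match t with
      | Var _ => None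
      | Fn _ ts => match nth_error ts i with
                   | Some u => tsub_at u p'
                   | None => None
                   end
      end
  end.

Fixpoint treplace (t : term) (p : list nat) (u : term) : term :=
  match p with
  | [] => u
  | i :: p' =>
      match t with
      | Var _ => t
      | Fn f ts => match nth_error ts i with
                   | Some w => Fn f (firstn i ts ++ treplace w p' u :: skipn (S i) ts)
                   | None => t
                   end
      end
  end.

Definition asub_at (A : atom) (p : list nat) : option term :=
  match p with
  | [] => None
  | i :: p' => match nth_error (aargs A) i with
               | Some w => tsub_at w p'
               | None => None
               end
  end.

Definition areplace (A : atom) (p : list nat) (u : term) : atom :=
  match p with
  | [] => A
  | i :: p' => match nth_error (aargs A) i with
               | Some w => Atom (apred A)
                             (firstn i (aargs A) ++ treplace w p' u :: skipn (S i) (aargs A))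
               | None => A
               end
  end.

Definition rename (x x' : nat) : subst :=
  fun v => if Nat.eqb v x then Var x' else Var v.

Definition lin_orig (Gam : list atom) (E : atom) : clause := Cl Gam [E].
Definition lin_new (Gam : list atom) (E : atom) (x x' : nat) (q : list nat) : clause :=
  Cl (map (asubst (rename x x')) Gam ++ Gam) [areplace E q (Var x')].

Definition add_clause (N : clause_set) (C : clause) : clause_set :=
  fun D => N D \/ D = C.

(* A ground instance of the linearized clause under a substitution r with
   x r = x' r is the ground instance of the original clause with its
   antecedent duplicated, so the two have the same truth value in every
   interpretation.  Hence any model of a grounding of the modified core would
   also be a model of the corresponding grounding of the given core. *)
From Stdlib Require Import List Arith Permutation Classical.
Import ListNotations.

Fixpoint term_nested_ind (P : term -> Prop) (HV : forall v, P (Var v))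
  (HF : forall f ts, Forall P ts -> P (Fn f ts)) (t : term) : P t :=
  match t with
  | Var v => HV v
  | Fn f ts =>
      HF f ts ((fix go l := match l return Forall P l with
                            | [] => Forall_nil _
                            | u :: l' => Forall_cons _ (term_nested_ind P HV HF u) (go l')
                            end) ts)
  end.

Lemma tsubst_ext_in s1 s2 u :
  (forall v, In v (tvars u) -> s1 v = s2 v) -> tsubst s1 u = tsubst s2 u.
Proof.
  revert u; apply (term_nested_ind (fun u => _ -> _)).
  - intros v H; apply H; simpl; auto.
  - intros f ts IH H; simpl; f_equal; apply map_ext_in; intros u Hu.
    rewrite Forall_forall in IH; apply IH; auto.
    intros v Hv; apply H; simpl; apply in_flat_map; eauto.
Qed.

Lemma tsubst_comp s1 s2 u :
  tsubst s2 (tsubst s1 u) = tsubst (fun v => tsubst s2 (s1 v)) u.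
Proof.
  revert u; apply term_nested_ind.
  - reflexivity.
  - intros f ts IH; simpl; f_equal; rewrite map_map; apply map_ext_in; intros u Hu.
    rewrite Forall_forall in IH; apply IH; auto.
Qed.

Lemma tsubst_ground s u : ground u -> tsubst s u = u.
Proof.
  revert u; apply (term_nested_ind (fun u => _ -> _)).
  - intros v H; discriminate H.
  - intros f ts IH H; simpl; f_equal.
    rewrite <- map_id; apply map_ext_in; intros u Hu.
    rewrite Forall_forall in IH; apply IH; auto.
    unfold ground in *; simpl in H.
    destruct (tvars u) as [|v l] eqn:Hv; auto.
    assert (Hin : In v (flat_map tvars ts)) by (apply in_flat_map; exists u; rewrite Hv; simpl; auto).
    rewrite H in Hin; destruct Hin.
Qed.

Lemma asubst_ext_in s1 s2 A :
  (forall v, In v (avars A) -> s1 v = s2 v) -> asubst s1 A = asubst s2 A.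
Proof.
  intro H; unfold asubst; f_equal; apply map_ext_in; intros u Hu.
  apply tsubst_ext_in; intros v Hv; apply H; apply in_flat_map; eauto.
Qed.

Lemma asubst_comp s1 s2 A :
  asubst s2 (asubst s1 A) = asubst (fun v => tsubst s2 (s1 v)) A.
Proof.
  unfold asubst; simpl; f_equal; rewrite map_map; apply map_ext; intro; apply tsubst_comp.
Qed.

Lemma csubst_ext_in s1 s2 C :
  (forall v, In v (cvars C) -> s1 v = s2 v) -> csubst s1 C = csubst s2 C.
Proof.
  intro H; unfold csubst; f_equal; apply map_ext_in; intros a Ha;
    apply asubst_ext_in; intros v Hv; apply H; apply in_app_iff;
    [left | right]; apply in_flat_map; eauto.
Qed.

Lemma csubst_comp s1 s2 C :
  csubst s2 (csubst s1 C) = csubst (fun v => tsubst s2 (s1 v)) C.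
Proof.
  unfold csubst; simpl; f_equal; rewrite map_map; apply map_ext; intro; apply asubst_comp.
Qed.

Lemma csubst_ground_idem s s' C :
  (forall v, ground (s v)) -> csubst s' (csubst s C) = csubst s C.
Proof.
  intro H; rewrite csubst_comp; apply csubst_ext_in; intros v _; apply tsubst_ground; auto.
Qed.

Lemma clause_eqv_csubst s C D : clause_eqv C D -> clause_eqv (csubst s C) (csubst s D).
Proof. intros [H1 H2]; split; simpl; apply Permutation_map; auto. Qed.

Definition clause_true (I : interp) (D : clause) : Prop :=
  (exists A, In A (succ D) /\ I A) \/ ~ (forall A, In A (ante D) -> I A).

Lemma models_ground_iff I s C :
  (forall v, ground (s v)) -> models I (csubst s C) <-> clause_true I (csubst s C).
Proof.
  intro Hg; split.
  - intro H; specialize (H s (fun v _ => Hg v)); rewrite csubst_ground_idem in H; auto.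
  - intros H s' _; rewrite csubst_ground_idem; auto.
Qed.

Lemma clause_true_eqv I C D : clause_eqv C D -> clause_true I D -> clause_true I C.
Proof.
  intros [Ha Hs] [[A [HA HI]] | H].
  - left; exists A; split; auto; apply Permutation_in with (succ D); auto.
    apply Permutation_sym; auto.
  - right; intro H'; apply H; intros A HA; apply H'.
    apply Permutation_in with (ante D); auto; apply Permutation_sym; auto.
Qed.

(* A grounding of the replaced core need not ground the clauses it removed from
   the original core; this completion makes it a grounding of the latter. *)
Definition ground_completion (t : subst) : subst :=
  fun v => match tvars (t v) with [] => t v | _ => Fn 0 [] end.

Lemma ground_completion_ground t v : ground (ground_completion t v).
Proof.
  unfold ground_completion, ground; destruct (tvars (t v)) eqn:Hv; [exact Hv | reflexivity].
Qed.

Lemma csubst_ground_completion t C :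
  (forall v, In v (cvars C) -> ground (t v)) -> csubst (ground_completion t) C = csubst t C.
Proof.
  intro H; apply csubst_ext_in; intros v Hv; specialize (H v Hv).
  unfold ground_completion; unfold ground in H; rewrite H; reflexivity.
Qed.

Lemma nth_error_split {A} (l : list A) i w :
  nth_error l i = Some w -> l = firstn i l ++ w :: skipn (S i) l.
Proof.
  revert i; induction l as [|a l IH]; intros [|i] H; simpl in *; try discriminate.
  - injection H as ->; auto.
  - f_equal; apply IH; auto.
Qed.

Lemma tsubst_treplace s p : forall w u u',
  tsub_at w p = Some u -> tsubst s u' = tsubst s u ->
  tsubst s (treplace w p u') = tsubst s w.
Proof.
  induction p as [|i p IH]; intros w u u' Hw Hu.
  - injection Hw as ->; auto.
  - destruct w as [v | f ts]; [discriminate |]; cbn [tsub_at treplace] in *.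
    destruct (nth_error ts i) as [w0 |] eqn:Hi; [| discriminate].
    cbn [tsubst]; rewrite map_app, map_cons, (IH w0 u u' Hw Hu).
    rewrite <- map_cons, <- map_app, <- (nth_error_split ts i w0 Hi); reflexivity.
Qed.

Lemma asubst_areplace s A q y y' :
  asub_at A q = Some (Var y) -> s y' = s y ->
  asubst s (areplace A q (Var y')) = asubst s A.
Proof.
  intros Hq Hy; destruct q as [|i q]; [discriminate |]; cbn [asub_at areplace] in *.
  destruct (nth_error (aargs A) i) as [w |] eqn:Hi; [| discriminate].
  unfold asubst; cbn [apred aargs]; f_equal.
  rewrite map_app, map_cons, (tsubst_treplace s q w (Var y) (Var y') Hq Hy).
  rewrite <- map_cons, <- map_app, <- (nth_error_split (aargs A) i w Hi); reflexivity.
Qed.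

Lemma asubst_rename s y y' A :
  s y' = s y -> asubst s (asubst (rename y y') A) = asubst s A.
Proof.
  intro Hy; rewrite asubst_comp; apply asubst_ext_in; intros v _.
  unfold rename; destruct (Nat.eqb v y) eqn:Hv; simpl; auto.
  apply Nat.eqb_eq in Hv; subst; auto.
Qed.

Lemma clause_true_lin_new I Gam E x x' q r :
  asub_at E q = Some (Var x) -> r x' = r x ->
  clause_true I (csubst r (lin_orig Gam E)) ->
  clause_true I (csubst r (lin_new Gam E x x' q)).
Proof.
  intros Hq Hr Horig; unfold lin_new, lin_orig, csubst in *; simpl in *.
  rewrite (asubst_areplace r E q x x' Hq Hr), map_app, map_map.
  rewrite (map_ext _ _ (fun A => asubst_rename r x x' A Hr)).
  destruct Horig as [Hs | Ha]; [left; exact Hs | right].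
  intro H; apply Ha; intros A HA; apply H; apply in_app_iff; auto.
Qed.

Lemma finite_set_filter (S : clause_set) (P : clause -> Prop) :
  finite_set S -> finite_set (fun C => S C /\ P C).
Proof.
  intros [l Hl].
  enough (Hf : exists l', forall C, In C l' <-> In C l /\ P C).
  { destruct Hf as [l' Hl']; exists l'; intro C; rewrite Hl', Hl; tauto. }
  clear Hl; induction l as [|D l [l' IH]].
  - exists []; simpl; tauto.
  - destruct (classic (P D)) as [HD | HD].
    + exists (D :: l'); intro C; simpl; rewrite IH; split; [intros [<- | ] | intros [[<- | ] ]]; tauto.
    + exists l'; intro C; simpl; rewrite IH; split; [tauto | intros [[<- | ] ]; tauto].
Qed.

Lemma finite_set_union (S T : clause_set) :
  finite_set S -> finite_set T -> finite_set (fun C => S C \/ T C).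
Proof.
  intros [l Hl] [l' Hl']; exists (l ++ l'); intro C; rewrite in_app_iff, Hl, Hl'; tauto.
Qed.

Lemma finite_set_image {A} (f : A -> clause) (l : list A) :
  finite_set (fun C => exists a, In a l /\ C = f a).
Proof.
  exists (map f l); intro C; rewrite in_map_iff; split; intros [a [H1 H2]]; eauto.
Qed.

Section LinearCore.

Variables (N Ncore : clause_set) (Gam : list atom) (E : atom) (x x' : nat)
  (q : list nat) (sigmas : list subst).

Definition sigma_instance (C : clause) : Prop :=
  exists s, In s sigmas /\ clause_eqv C (csubst s (lin_new Gam E x x' q)).

Definition replaced_core : clause_set :=
  fun C => (Ncore C /\ ~ sigma_instance C)
           \/ (exists s, In s sigmas /\ C = csubst s (lin_orig Gam E)).

Lemma replaced_core_finite : finite_set Ncore -> finite_set replaced_core.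
Proof.
  intro Hfin; apply finite_set_union;
    [apply finite_set_filter, Hfin | apply finite_set_image].
Qed.

Lemma replaced_core_instances :
  (forall C, Ncore C -> exists C', add_clause N (lin_new Gam E x x' q) C' /\ is_instance C C') ->
  (forall C, Ncore C -> is_instance C (lin_new Gam E x x' q) -> sigma_instance C) ->
  forall C, replaced_core C -> exists C', add_clause N (lin_orig Gam E) C' /\ is_instance C C'.
Proof.
  intros Hinst Hsig C [[HC Hn] | [s [_ ->]]].
  - destruct (Hinst C HC) as [C' [[HN | ->] Hi]].
    + exists C'; split; [left |]; auto.
    + exfalso; apply Hn, Hsig; auto.
  - exists (lin_orig Gam E); split; [right; auto |].
    exists s; split; apply Permutation_refl.
Qed.

Hypothesis x_at_q : asub_at E q = Some (Var x).
Hypothesis sigmas_identify : forall s, In s sigmas -> s x = s x'.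

Lemma replaced_core_conflicting :
  (forall t, grounds t Ncore -> ~ satisfiable (set_subst t Ncore)) ->
  forall t, grounds t replaced_core -> ~ satisfiable (set_subst t replaced_core).
Proof.
  intros Hcore t Ht [I HI].
  set (t' := ground_completion t).
  assert (Ht' : forall C, replaced_core C -> csubst t' C = csubst t C)
    by (intros C HC; apply csubst_ground_completion, Ht, HC).
  assert (HI' : forall C, replaced_core C -> clause_true I (csubst t' C)).
  { intros C HC; apply models_ground_iff; [apply ground_completion_ground |].
    rewrite Ht' by exact HC; apply HI; exists C; auto. }
  apply (Hcore t'); [intros C _ v _; apply ground_completion_ground |].
  exists I; intros D [C [HC ->]].
  apply models_ground_iff; [apply ground_completion_ground |].
  destruct (classic (sigma_instance C)) as [[s [Hs Heqv]] | Hn].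
  - apply clause_true_eqv with (csubst t' (csubst s (lin_new Gam E x x' q)));
      [apply clause_eqv_csubst; auto |].
    assert (Horig := HI' (csubst s (lin_orig Gam E)) (or_intror (ex_intro _ s (conj Hs eq_refl)))).
    rewrite csubst_comp in Horig |- *.
    apply clause_true_lin_new; auto; rewrite (sigmas_identify s Hs); reflexivity.
  - apply HI'; left; auto.
Qed.

End LinearCore.

Theorem lemma8 (N : clause_set) (Gam : list atom) (E : atom) (x x' : nat)
  (p q : list nat) (Ncore : clause_set) (sigmas : list subst) :
  p <> q ->
  asub_at E p = Some (Var x) ->
  asub_at E q = Some (Var x) ->
  ~ In x' (cvars (lin_orig Gam E)) ->
  (forall C, N C -> ~ In x' (cvars C)) ->
  conflicting_core_of Ncore (add_clause N (lin_new Gam E x x' q)) ->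
  (forall s, In s sigmas ->
     exists C, Ncore C /\ clause_eqv C (csubst s (lin_new Gam E x x' q))) ->
  (forall C, Ncore C -> is_instance C (lin_new Gam E x x' q) ->
     exists s, In s sigmas /\ clause_eqv C (csubst s (lin_new Gam E x x' q))) ->
  (forall s, In s sigmas -> s x = s x') ->
  conflicting_core_of
    (fun C =>
       (Ncore C /\
        ~ (exists s, In s sigmas /\ clause_eqv C (csubst s (lin_new Gam E x x' q))))
       \/ (exists s, In s sigmas /\ C = csubst s (lin_orig Gam E)))
    (add_clause N (lin_orig Gam E)).
Proof.
  intros _ _ Hq _ _ [[Hfin Hcore] Hinst] _ Hsig Hxx.
  split; [split |].
  - exact (replaced_core_finite Ncore Gam E x x' q sigmas Hfin).
  - exact (replaced_core_conflicting Ncore Gam E x x' q sigmas Hq Hxx Hcore).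
  - exact (replaced_core_instances N Ncore Gam E x x' q sigmas Hinst Hsig).
Qed.
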